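(* Let $r,k,s_1,\dots,s_k$ be nonnegative integers and $\Gamma$ the complete bipartite supernova quiver with these parameters. Let $\mathbf{v}\in\mathbb{Z}_{\ge0}^I$. If $\mathbf{v}\in\Phi(\Gamma)$ and $v_{(i;0)}>0$ for some $i\in\{1,\dots,k\}$, then $v_{(i;0)}\ge v_{(i;1)}\ge v_{(i;2)}\ge\cdots\ge v_{(i;s_i)}$.
   Context: $\Gamma$ has vertex set $I$ consisting of $(l)$, $l=1,\dots,r$, and $(i;j)$, $i=1,\dots,k$, $j=0,\dots,s_i$; arrows: one arrow $(l)\to(i;0)$ for every $l,i$, and one arrow $(i;j)\to(i;j-1)$ for $1\le j\le s_i$. $\Phi(\Gamma)\subset\mathbb{Z}^I$ is the root system of $\Gamma$: with the bilinear form $(\mathbf{e}_a,\mathbf{e}_a)=2$, $(\mathbf{e}_a,\mathbf{e}_b)=-$(number of edges joining $a,b$) for $a\ne b$, and the Weyl group $W$ generated by $s_a(\lambda)=\lambda-(\lambda,\mathbf{e}_a)\mathbf{e}_a$, the real roots are the $w(\mathbf{e}_a)$, and the imaginary roots are $\pm w(\delta)$ with $w\in W$ and $\delta$ a nonzero vector in $\mathbb{Z}_{\ge0}^I$ with connected support and $(\mathbf{e}_a,\delta)\le0$ for all $a$. *)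

From HB Require Import structures.
From mathcomp Require Import all_boot all_order all_algebra.
Set Implicit Arguments. Unset Strict Implicit. Unset Printing Implicit Defensive.
Import Order.TTheory GRing.Theory Num.Theory.
Local Open Scope ring_scope.

(* Complete bipartite supernova quiver with parameters r, k, s_1..s_k
   (s : 'I_k -> nat).  Vertices: inl l  = (l),  l < r;
   inr (Tagged i j) = (i;j), i < k, j <= s i. *)
Definition arms (k : nat) (s : 'I_k -> nat) := {i : 'I_k & 'I_(s i).+1}.
Definition vert (r k : nat) (s : 'I_k -> nat) : finType :=
  ('I_r + arms s)%type.

Definition arm (r k : nat) (s : 'I_k -> nat) (i : 'I_k) (j : 'I_(s i).+1)
  : vert r s := inr (Tagged (fun i => 'I_(s i).+1) j).

(* number of edges joining two vertices of the underlying graph (0 or 1):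
   (l) -- (i;0) for all l, i ; (i;j) -- (i;j-1) for 1 <= j <= s_i *)
Definition adj (r k : nat) (s : 'I_k -> nat) (a b : vert r s) : bool :=
  match a, b with
  | inl _, inl _ => false
  | inl _, inr y => nat_of_ord (tagged y) == 0%N
  | inr x, inl _ => nat_of_ord (tagged x) == 0%N
  | inr x, inr y =>
      (tag x == tag y) &&
      (((nat_of_ord (tagged x)).+1 == nat_of_ord (tagged y))
       || ((nat_of_ord (tagged y)).+1 == nat_of_ord (tagged x)))
  end.

Definition cartan (r k : nat) (s : 'I_k -> nat) (a b : vert r s) : int :=
  if a == b then 2 else - ((adj a b : nat)%:Z).

Definition form (r k : nat) (s : 'I_k -> nat) (x y : {ffun vert r s -> int}) : int :=
  \sum_(a : vert r s) \sum_(b : vert r s) x a * y b * cartan a b.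

Definition evec (r k : nat) (s : 'I_k -> nat) (a : vert r s) : {ffun vert r s -> int} :=
  [ffun b => ((a == b : nat))%:Z].

Definition refl (r k : nat) (s : 'I_k -> nat) (a : vert r s) (x : {ffun vert r s -> int})
  : {ffun vert r s -> int} :=
  [ffun b => x b - form x (evec a) * evec a b].

(* action of the Weyl group element s_{a_1} ... s_{a_n} given by w = [:: a_1; ...; a_n];
   every element of W is of this form *)
Definition weyl (r k : nat) (s : 'I_k -> nat) (w : seq (vert r s)) (x : {ffun vert r s -> int})
  : {ffun vert r s -> int} := foldr (@refl r k s) x w.

Definition connected_support (r k : nat) (s : 'I_k -> nat) (x : {ffun vert r s -> int}) : Prop :=
  forall a b : vert r s, x a != 0 -> x b != 0 ->
    connect (fun c d => [&& adj c d, x c != 0 & x d != 0]) a b.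

Definition fundamental (r k : nat) (s : 'I_k -> nat) (d : {ffun vert r s -> int}) : Prop :=
  [/\ d != 0, (forall a, 0 <= d a), connected_support d & (forall a, form (evec a) d <= 0)].

Definition real_root (r k : nat) (s : 'I_k -> nat) (v : {ffun vert r s -> int}) : Prop :=
  exists (a : vert r s) (w : seq (vert r s)), v = weyl w (evec a).

Definition imaginary_root (r k : nat) (s : 'I_k -> nat) (v : {ffun vert r s -> int}) : Prop :=
  exists (d : {ffun vert r s -> int}) (w : seq (vert r s)),
    fundamental d /\ (v = weyl w d \/ v = [ffun b => - weyl w d b]).

Definition is_root (r k : nat) (s : 'I_k -> nat) (v : {ffun vert r s -> int}) : Prop :=
  real_root v \/ imaginary_root v.

(* Every root is either nonnegative or nonpositive.  For a real root this is
   the classical argument: if l(w s_a) > l(w) then w(e_a) >= 0, by induction on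
   l(w), factoring a reduced word as v ++ vI with vI a word in two letters a, b
   and l(v) minimal.  The graph is simply laced, so the reduced words of the
   dihedral part are short enough to be listed.  Lengths change by exactly one
   under a simple reflection because det w = (-1)^(word length).  For an
   imaginary root, w(d) >= d: each letter of a reduced word adds a nonnegative
   multiple of a positive real root.

   Now let v be a root with v_(i;0) > 0.  Reflecting in (i;p), p >= 1, fixes
   v_(i;0) and replaces v_(i;p) by v_(i;p-1) + v_(i;p+1) - v_(i;p); the result
   is a root with a positive coordinate, hence nonnegative.  Applying the
   inequality v_(i;p+1) <= v_(i;p) to that root yields v_(i;p) <= v_(i;p-1), so
   a downward induction along the arm proves the theorem. *)

From Pilot Require Import Defs.
From HB Require Import structures.
From mathcomp Require Import all_boot all_order all_algebra.
From mathcomp Require Import fingroup perm boolp ring zify.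
Import Order.TTheory GRing.Theory Num.Theory.
Set Implicit Arguments. Unset Strict Implicit. Unset Printing Implicit Defensive.
Local Open Scope ring_scope.

(* [all_algebra] exports a sesquilinear [form] that would shadow ours. *)
Local Notation form := Defs.form.

Lemma det_id_except_row (R : comPzRingType) n (A : 'M[R]_n) i0 :
  (forall i j, i != i0 -> A i j = (i == j)%:R) -> \det A = A i0 i0.
Proof.
move=> idA; rewrite /determinant (bigD1 (1%g : 'S_n)) //= [X in _ + X]big1 ?addr0.
  rewrite odd_perm1 expr0 mul1r (bigD1 i0) //= perm1 big1 ?mulr1 // => i ii0.
  by rewrite perm1 idA // eqxx.
move=> p p1; have [i pi] : exists i, p i != i.
  apply/existsP; apply: contraR p1 => /existsPn fixp; apply/eqP/permP => x.
  by rewrite perm1; apply/eqP; move: (fixp x); rewrite negbK.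
have [t t_i0 pt] : exists2 t, t != i0 & p t != t.
  case: (eqVneq i i0) pi => [-> pi0|]; last by exists i.
  by exists (p i0); rewrite // (inj_eq perm_inj).
by rewrite (bigD1 t) //= idA // [t == _]eq_sym (negbTE pt) mul0r mulr0.
Qed.

Section WeylGroup.
Variables (r k : nat) (s : 'I_k -> nat).
Local Notation V := (vert r s).
Local Notation vec := {ffun V -> int}.
Implicit Types (a b c : V) (x y : vec) (u w : seq V).

Lemma adjC a b : adj a b = adj b a.
Proof. by case: a => [x|x]; case: b => [y|y] //=; rewrite eq_sym orbC. Qed.

Lemma adj_irrefl a : adj a a = false.
Proof. by case: a => [x|x] //=; rewrite eqxx orbb /= eqn_leq ltnn. Qed.

Lemma cartanC a b : cartan a b = cartan b a.
Proof. by rewrite /cartan eq_sym adjC. Qed.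

Lemma cartan_diag a : cartan a a = 2.
Proof. by rewrite /cartan eqxx. Qed.

Lemma cartan_neq a b : a != b -> cartan a b = - (adj a b : nat)%:Z.
Proof. by rewrite /cartan => /negbTE ->. Qed.

Lemma evecE a b : evec a b = (a == b : nat)%:Z.
Proof. by rewrite /evec ffunE. Qed.

Lemma evecC a b : evec a b = evec b a.
Proof. by rewrite !evecE eq_sym. Qed.

Lemma sum_evec_mul a (F : V -> int) : \sum_b evec a b * F b = F a.
Proof.
rewrite (bigD1 a) //= big1 ?addr0 => [|b ba]; first by rewrite evecE eqxx mul1r.
by rewrite evecE eq_sym (negbTE ba) mul0r.
Qed.

Lemma form_evec x a : form x (evec a) = \sum_b x b * cartan b a.
Proof.
apply: eq_bigr => b _; rewrite -(sum_evec_mul a (fun c => x b * cartan b c)).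
by apply: eq_bigr => c _; ring.
Qed.

Lemma form_evecC x a : form (evec a) x = form x (evec a).
Proof.
rewrite form_evec -(sum_evec_mul a (fun c => \sum_b x b * cartan b c)).
apply: eq_bigr => c _.
by rewrite mulr_sumr; apply: eq_bigr => b _; rewrite cartanC; ring.
Qed.

Lemma form_evec_evec a b : form (evec a) (evec b) = cartan a b.
Proof. by rewrite form_evec sum_evec_mul. Qed.

Lemma form_evec_adj x a : form x (evec a) = 2 * x a - \sum_(b | adj b a) x b.
Proof.
rewrite form_evec (bigD1 a) //= cartan_diag mulrC; congr (_ + _).
transitivity (- \sum_(b | b != a) x b * (adj b a : nat)%:Z).
  by rewrite -sumrN; apply: eq_bigr => b ba; rewrite cartan_neq // mulrN.
rewrite [in RHS]big_mkcond [in RHS](bigD1 a) //= adj_irrefl add0r; congr -%R.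
by apply: eq_bigr => b _; case: adj; rewrite ?mulr1 ?mulr0.
Qed.

Lemma form_evecB x y a : form (x - y) (evec a) = form x (evec a) - form y (evec a).
Proof. by rewrite !form_evec -sumrB; apply: eq_bigr => b _; rewrite !ffunE mulrBl. Qed.

Lemma refl_neq a c x : a != c -> refl a x c = x c.
Proof. by move=> ac; rewrite ffunE evecE (negbTE ac) mulr0 subr0. Qed.

Lemma form_refl b x a :
  form (refl b x) (evec a) = form x (evec a) - form x (evec b) * cartan b a.
Proof.
rewrite -[X in _ - X](sum_evec_mul b (fun c => form x (evec b) * cartan c a)).
rewrite [form (refl _ _) _]form_evec [form x (evec a)]form_evec -sumrB.
by apply: eq_bigr => c _; rewrite ffunE; ring.
Qed.

Lemma refl_invol a x : refl a (refl a x) = x.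
Proof. by apply/ffunP => c; rewrite !ffunE form_refl cartan_diag; ring. Qed.

Lemma refl_commute a b x : ~~ adj a b -> refl a (refl b x) = refl b (refl a x).
Proof.
have [-> //|ab nab] := eqVneq a b.
have cab : cartan a b = 0 by rewrite cartan_neq // (negbTE nab).
by apply/ffunP => c; rewrite !ffunE !form_refl [cartan b a]cartanC cab; ring.
Qed.

Lemma refl_braid a b x : adj a b ->
  refl a (refl b (refl a x)) = refl b (refl a (refl b x)).
Proof.
move=> ab; have cab : cartan a b = -1.
  by rewrite cartan_neq ?ab //; apply: contraTneq ab => ->; rewrite adj_irrefl.
by apply/ffunP => c; rewrite !ffunE !form_refl [cartan b a]cartanC cab !cartan_diag; ring.
Qed.

Lemma refl_is_zmod_morphism a : zmod_morphism (refl a).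
Proof. by move=> x y; apply/ffunP => c; rewrite !ffunE form_evecB; ring. Qed.

HB.instance Definition _ a :=
  GRing.isZmodMorphism.Build vec vec (refl a) (refl_is_zmod_morphism a).

Lemma weyl_is_zmod_morphism w : zmod_morphism (weyl w).
Proof. by elim: w => // a w IH x y /=; rewrite IH refl_is_zmod_morphism. Qed.

HB.instance Definition _ w :=
  GRing.isZmodMorphism.Build vec vec (weyl w) (weyl_is_zmod_morphism w).

Lemma weyl_cat u w x : weyl (u ++ w) x = weyl u (weyl w x).
Proof. exact: foldr_cat. Qed.

Lemma weyl_rcons w a x : weyl (rcons w a) x = weyl w (refl a x).
Proof. by rewrite -cats1 weyl_cat. Qed.

Definition eqw u w := forall x, weyl u x = weyl w x.

Lemma eqw_sym u w : eqw u w -> eqw w u.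
Proof. by move=> uw x; rewrite uw. Qed.

Lemma eqw_trans u v w : eqw u v -> eqw v w -> eqw u w.
Proof. by move=> uv vw x; rewrite uv vw. Qed.

Lemma eqw_cat u u' w w' : eqw u u' -> eqw w w' -> eqw (u ++ w) (u' ++ w').
Proof. by move=> uu ww x; rewrite !weyl_cat ww uu. Qed.

Lemma eqw_catl u w w' : eqw w w' -> eqw (u ++ w) (u ++ w').
Proof. exact: eqw_cat. Qed.

Lemma eqw_rcons u w a : eqw u w -> eqw (rcons u a) (rcons w a).
Proof. by move=> uw x; rewrite !weyl_rcons uw. Qed.

Lemma eqw_cancel a w : eqw [:: a, a & w] w.
Proof. by move=> x /=; rewrite refl_invol. Qed.

Lemma eqw_rcons_cancel w a : eqw (rcons (rcons w a) a) w.
Proof. by move=> x; rewrite !weyl_rcons refl_invol. Qed.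

Lemma eqw_commute a b : ~~ adj a b -> eqw [:: a; b; a] [:: b].
Proof. by move=> nab x /=; rewrite refl_commute // refl_invol. Qed.

Lemma eqw_braid a b : adj a b -> eqw [:: b; a; b; a] [:: a; b].
Proof. by move=> ab x /=; rewrite refl_braid ?refl_invol // adjC. Qed.

Lemma refl_coord a x c :
  refl a x c = \sum_b (evec b c - cartan b a * evec a c) * x b.
Proof.
rewrite ffunE form_evec mulr_suml -{1}(sum_evec_mul c x) -sumrB.
by apply: eq_bigr => b _; rewrite evecC; ring.
Qed.

Definition weyl_mx w : 'M[int]_#|V| :=
  \matrix_(i, j) weyl w (evec (enum_val j)) (enum_val i).

Lemma weyl_mx_cons a w : weyl_mx (a :: w) = weyl_mx [:: a] *m weyl_mx w.
Proof.
apply/matrixP => i j; rewrite !mxE /= refl_coord.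
under [RHS]eq_bigr do rewrite !mxE /=.
rewrite -(big_enum_val (fun b => refl a (evec b) (enum_val i) *
                                  weyl w (evec (enum_val j)) b)) /=.
by apply: eq_bigr => b _; rewrite [refl _ _ _]ffunE form_evec_evec.
Qed.

Lemma det_weyl_mx_refl a : \det (weyl_mx [:: a]) = -1.
Proof.
rewrite (@det_id_except_row _ _ _ (enum_rank a)) => [|i j ia].
  by rewrite mxE /= [refl _ _ _]ffunE form_evec_evec enum_rankK !evecE eqxx cartan_diag.
rewrite mxE /= [refl _ _ _]ffunE form_evec_evec !evecE (inj_eq enum_val_inj) eq_sym.
have /negbTE-> : a != enum_val i by apply: contra ia => /eqP->; rewrite enum_valK.
by rewrite mulr0 subr0; case: (i == j).
Qed.

Lemma det_weyl_mx w : \det (weyl_mx w) = (-1) ^+ size w.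
Proof.
elim: w => [|a w IH].
  have -> : weyl_mx [::] = 1%:M.
    by apply/matrixP => i j; rewrite !mxE evecE (inj_eq enum_val_inj) eq_sym; case: (i == j).
  by rewrite det1.
by rewrite weyl_mx_cons det_mulmx det_weyl_mx_refl IH exprS.
Qed.

Lemma eqw_odd_size u w : eqw u w -> odd (size u) = odd (size w).
Proof.
move=> uw; have : weyl_mx u = weyl_mx w by apply/matrixP => i j; rewrite !mxE uw.
by move/(congr1 determinant); rewrite !det_weyl_mx -signr_odd -[RHS]signr_odd => /signr_inj.
Qed.

Lemma exists_word_length w : exists n, `[< exists2 u, size u = n & eqw u w >].
Proof. by exists (size w); apply/asboolP; exists w. Qed.

Definition weyl_length w := ex_minn (exists_word_length w).

Lemma weyl_length_spec w : exists2 u, size u = weyl_length w & eqw u w.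
Proof. by rewrite /weyl_length; case: ex_minnP => n /asboolP. Qed.

Lemma weyl_length_min u w : eqw u w -> (weyl_length w <= size u)%N.
Proof.
by move=> uw; rewrite /weyl_length; case: ex_minnP => n _; apply; apply/asboolP; exists u.
Qed.

Lemma weyl_length_size w : (weyl_length w <= size w)%N.
Proof. exact: weyl_length_min. Qed.

Lemma weyl_length_eqw u w : eqw u w -> weyl_length u = weyl_length w.
Proof.
move=> uw; apply/eqP; rewrite eqn_leq; apply/andP; split.
  have [w' <- w'w] := weyl_length_spec w.
  exact/weyl_length_min/(eqw_trans w'w)/eqw_sym.
have [u' <- u'u] := weyl_length_spec u.
exact/weyl_length_min/(eqw_trans u'u).
Qed.

Lemma weyl_length_cat u w : (weyl_length (u ++ w) <= weyl_length u + weyl_length w)%N.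
Proof.
have [u' <- u'u] := weyl_length_spec u; have [w' <- w'w] := weyl_length_spec w.
by rewrite -size_cat; apply/weyl_length_min/eqw_cat.
Qed.

Lemma odd_weyl_length w : odd (weyl_length w) = odd (size w).
Proof. by have [u <- /eqw_odd_size] := weyl_length_spec w. Qed.

Lemma weyl_length_rcons w a :
  weyl_length (rcons w a) = (weyl_length w).+1 \/ weyl_length w = (weyl_length (rcons w a)).+1.
Proof.
have rcons_le v : (weyl_length (rcons v a) <= (weyl_length v).+1)%N.
  by rewrite -cats1 (leq_trans (weyl_length_cat _ _)) // -addn1 leq_add2l weyl_length_size.
have := rcons_le (rcons w a); rewrite (weyl_length_eqw (eqw_rcons_cancel w a)).
have : weyl_length (rcons w a) != weyl_length w.
  by apply/eqP => /(congr1 odd); rewrite !odd_weyl_length size_rcons /=; case: odd.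
by move: (rcons_le w); lia.
Qed.

Definition reduced w := weyl_length w = size w.

Definition nonneg x := forall c, 0 <= x c.

Lemma refl_evec a : refl a (evec a) = - evec a.
Proof. by apply/ffunP => c; rewrite !ffunE form_evec_evec cartan_diag; ring. Qed.

Lemma refl_evec_neq a b : a != b -> refl b (evec a) = evec a + evec b *+ adj a b.
Proof.
move=> ab; apply/ffunP => c.
by rewrite !ffunE ffunMnE ffunE form_evec_evec cartan_neq //; case: adj => /=; ring.
Qed.

Lemma dihedral_root_nonneg a b vI :
  a != b -> all (fun c : V => (c == a) || (c == b)) vI ->
  reduced vI -> (size vI < weyl_length (rcons vI a))%N ->
  exists p q : nat, weyl vI (evec a) = evec a *+ p + evec b *+ q.
Proof.
(* vI ends with b, has no repeated letter, and is shorter than the braid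
   relation allows, so it is [::], [:: b] or [:: a; b]. *)
rewrite /reduced => ab; case/lastP: vI => [_ _ _|v1 x1]; first by exists 1%N, 0%N; rewrite addr0.
rewrite all_rcons => /andP[/orP[]/eqP-> v1ab] red grow.
  exfalso; have := weyl_length_min (eqw_sym (eqw_rcons_cancel v1 a)).
  by move: grow; rewrite size_rcons; lia.
case/lastP: v1 v1ab red grow => [_ _ _|v2 x2].
  by exists 1%N, (adj a b); rewrite /= refl_evec_neq.
rewrite all_rcons => /andP[/orP[]/eqP-> v2ab] red grow; last first.
  exfalso; have := weyl_length_min (eqw_sym (eqw_rcons_cancel v2 b)).
  by move: red; rewrite !size_rcons; lia.
have [adjab|nadj] := boolP (adj a b); last first.
  exfalso; have := weyl_length_min (eqw_catl v2 (eqw_sym (eqw_commute nadj))).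
  by rewrite -!cats1 -!catA /= !size_cat /= in grow *; lia.
case/lastP: v2 v2ab red grow => [_ _ _|v3 x3].
  exists 0%N, 1%N; rewrite /= refl_evec_neq // raddfD raddfMn /= refl_evec.
  rewrite refl_evec_neq 1?eq_sym //.
  by rewrite adjC adjab !mulr1n addrC addrK mulr0n add0r.
rewrite all_rcons => /andP[/orP[]/eqP-> _] red grow; exfalso.
  have := weyl_length_min (eqw_catl v3 (eqw_sym (eqw_cancel a [:: b]))).
  by rewrite -!cats1 -!catA /= !size_cat /= in red *; lia.
have := weyl_length_min (eqw_catl v3 (eqw_sym (eqw_braid adjab))).
by rewrite -!cats1 -!catA /= !size_cat /= in grow *; lia.
Qed.

Lemma reduced_rcons u b : reduced (rcons u b) -> reduced u.
Proof.
rewrite /reduced => red; have := weyl_length_size u; have := weyl_length_size [:: b].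
by have := weyl_length_cat u [:: b]; rewrite cats1 red size_rcons /=; lia.
Qed.

Lemma parabolic_decomposition u a b : reduced (rcons u b) ->
  exists v vI, [/\ all (fun c : V => (c == a) || (c == b)) vI,
    eqw (v ++ vI) (rcons u b), (weyl_length v + size vI = size (rcons u b))%N,
    (weyl_length v <= size u)%N &
    forall c, (c == a) || (c == b) -> (weyl_length v < weyl_length (rcons v c))%N].
Proof.
move=> red; pose P m := `[< exists v vI, [/\ all (fun c : V => (c == a) || (c == b)) vI,
    eqw (v ++ vI) (rcons u b), (weyl_length v + size vI = size (rcons u b))%N
    & weyl_length v = m] >].
have Pu : P (weyl_length u).
  apply/asboolP; exists u, [:: b]; split; rewrite /= ?eqxx ?orbT ?cats1 //.
  by rewrite (reduced_rcons red) size_rcons addn1.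
have [m /asboolP[v [vI [abvI vIu sz <-]]] minm] := ex_minnP (ex_intro P _ Pu).
exists v, vI; split => //.
  by rewrite -(reduced_rcons red) minm.
(* otherwise (rcons v c, c :: vI) would be a factorization with a shorter v *)
move=> c abc; have [-> //|shrink] := weyl_length_rcons v c; exfalso.
suff : (weyl_length v <= weyl_length (rcons v c))%N by rewrite shrink ltnn.
apply/minm/asboolP; exists (rcons v c), (c :: vI); split; rewrite /= ?abc //.
  by apply: eqw_trans vIu; rewrite cat_rcons; apply/eqw_catl/eqw_cancel.
by rewrite -sz shrink addSnnS.
Qed.

Theorem weyl_evec_nonneg w a :
  (weyl_length w < weyl_length (rcons w a))%N -> nonneg (weyl w (evec a)).
Proof.
have [n] := ubnP (weyl_length w); elim: n w a => // n IH w a ltwn grow.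
have [u su uw] := weyl_length_spec w.
rewrite -uw; rewrite -(weyl_length_eqw (eqw_rcons a uw)) -su in grow.
rewrite -su in ltwn; have red : reduced u by rewrite /reduced su (weyl_length_eqw uw).
case/(@lastP V): u {su uw} red grow ltwn => [|u b] red grow ltwn.
  by move=> c; rewrite evecE.
have ba : b != a.
  apply: contraTneq grow => ->; rewrite (weyl_length_eqw (eqw_rcons_cancel u a)) -leqNgt.
  by rewrite size_rcons ltnW // ltnS weyl_length_size.
have [v [vI [abvI vIu sz vlt vgrow]]] := parabolic_decomposition a red.
have [|||p [q vIa]] := @dihedral_root_nonneg a b vI _ abvI; rewrite 1?eq_sym //.
- rewrite /reduced; have := weyl_length_cat v vI.
  rewrite (weyl_length_eqw vIu) red -sz.
  by have := weyl_length_size vI; lia.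
- have := weyl_length_cat v (rcons vI a).
  by rewrite -rcons_cat (weyl_length_eqw (eqw_rcons a vIu)); move: grow sz; lia.
have ltvn : (weyl_length v < n)%N by move: ltwn; rewrite size_rcons; lia.
rewrite -vIu weyl_cat vIa raddfD !raddfMn => c; rewrite !ffunE !ffunMnE.
by rewrite addr_ge0 // mulrn_wge0 // IH // vgrow // eqxx ?orbT.
Qed.

Lemma real_root_sign w a : nonneg (weyl w (evec a)) \/ nonneg (- weyl w (evec a)).
Proof.
have [grow|shrink] := weyl_length_rcons w a.
  by left; apply: weyl_evec_nonneg; rewrite grow.
right; rewrite -raddfN /= -refl_evec -weyl_rcons; apply: weyl_evec_nonneg.
by rewrite (weyl_length_eqw (eqw_rcons_cancel w a)) shrink.
Qed.

Lemma reflE a x : refl a x = x - evec a *~ form x (evec a).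
Proof. by apply/ffunP => c; rewrite !ffunE ffunMzE ffunE -mulrzr intz mulrC. Qed.

Lemma fundamental_le_weyl d w : nonneg d -> (forall a, form (evec a) d <= 0) ->
  forall c, d c <= weyl w d c.
Proof.
move=> d_ge0 d_dom; have [n] := ubnP (weyl_length w); elim: n w => // n IH w ltwn.
have [u su uw] := weyl_length_spec w; rewrite -uw.
have red : reduced u by rewrite /reduced su (weyl_length_eqw uw).
rewrite -(weyl_length_eqw uw) in ltwn; case/(@lastP V): u {su uw} red ltwn => // u b red ltwn c.
have ub_ge0 : nonneg (weyl u (evec b)).
  by apply: weyl_evec_nonneg; rewrite red (reduced_rcons red) size_rcons.
rewrite weyl_rcons reflE raddfB raddfMz /= !ffunE ffunMzE -mulrzr intz.
rewrite (le_trans (IH u _ c)) ?lerDl ?oppr_ge0 ?mulr_ge0_le0 -?form_evecC //.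
by move: ltwn; rewrite red (reduced_rcons red) size_rcons.
Qed.

Lemma ffun_opp x : [ffun c => - x c] = - x.
Proof. by apply/ffunP => c; rewrite !ffunE. Qed.

Lemma is_root_weyl u v : is_root v -> is_root (weyl u v).
Proof.
case=> [[a [w ->]]|[d [w [dfund [->|->]]]]]; rewrite -?weyl_cat.
- by left; exists a, (u ++ w).
- by right; exists d, (u ++ w); split; [|left].
right; exists d, (u ++ w); split; [|right] => //.
by rewrite !ffun_opp raddfN weyl_cat.
Qed.

Lemma root_sign v : is_root v -> nonneg v \/ nonneg (- v).
Proof.
case=> [[a [w ->]]|[d [w [[_ d_ge0 _ d_dom] [->|->]]]]]; first exact: real_root_sign.
- by left => c; apply: le_trans (d_ge0 c) (fundamental_le_weyl w d_ge0 d_dom c).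
right => c; rewrite ffun_opp opprK.
exact: le_trans (d_ge0 c) (fundamental_le_weyl w d_ge0 d_dom c).
Qed.

Lemma root_nonneg v c : is_root v -> 0 < v c -> nonneg v.
Proof.
case/root_sign => // v_le0 v_gt0; have := v_le0 c.
by rewrite ffunE oppr_ge0 leNgt v_gt0.
Qed.

End WeylGroup.

Section Arms.
Variables (r k : nat) (s : 'I_k -> nat).
Local Notation V := (vert r s).
Local Notation vec := {ffun V -> int}.

Lemma arm_eq (i i' : 'I_k) (j : 'I_(s i).+1) (j' : 'I_(s i').+1) :
  (@arm r k s i j == @arm r k s i' j') = (i == i') && (j == j' :> nat).
Proof.
case: (eqVneq i i') j' => [<- j'|ii' j']; first exact: eq_Tagged.
by apply/negP => /eqP[/eqP]; rewrite (negbTE ii').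
Qed.

Variable i : 'I_k.
Local Notation A p := (@arm r k s i (inord p)).

Lemma arm_inord_eq p q : (p <= s i)%N -> (q <= s i)%N -> (A p == A q) = (p == q).
Proof. by move=> hp hq; rewrite arm_eq eqxx /= !inordK. Qed.

Lemma adj_arm p b : (0 < p <= s i)%N ->
  adj b (A p) = (b == A p.-1) || (p < s i)%N && (b == A p.+1).
Proof.
move=> /andP[p0 ps]; case: b => [l|[i' j']] /=.
  by rewrite /arm /= inordK ?(gtn_eqF p0) ?andbF.
rewrite -[inr _]/(@arm r k s i' j') !arm_eq.
have [ps'|sp] := ltnP p (s i); rewrite /= ?andbF ?orbF !inordK -?andb_orr; try lia.
all: case: (i' =P i) => //= ii'; subst i'; have := ltn_ord j'.
all: by do ![case: eqP => ?] => //=; lia.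
Qed.

Definition arm_coord (x : vec) p : int := if (p <= s i)%N then x (A p) else 0.

Lemma arm_coord_ge0 x p : nonneg x -> 0 <= arm_coord x p.
Proof. by move=> x_ge0; rewrite /arm_coord; case: ifP. Qed.

Lemma form_arm x p : (0 < p <= s i)%N ->
  form x (evec (A p)) = 2 * arm_coord x p - arm_coord x p.-1 - arm_coord x p.+1.
Proof.
move=> hp; have /andP[p0 ps] := hp.
rewrite form_evec_adj (eq_bigl _ _ (fun b => adj_arm b hp)) /arm_coord ps.
rewrite (leq_trans (leq_pred p) ps) -addrA -opprD.
have [ps'|sp] := ltnP p (s i); last first.
  by rewrite (big_pred1 (A p.-1)) ?addr0 // => b; rewrite orbF.
rewrite (bigD1 (A p.-1)) ?eqxx //= (big_pred1 (A p.+1)) // => b.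
rewrite /=; case: (eqVneq b (A p.+1)) => [->|_]; last by rewrite orbF andbN.
by rewrite orbT arm_inord_eq //; lia.
Qed.

Lemma arm_coord_refl x p q : (0 < p <= s i)%N ->
  arm_coord (refl (A p) x) q =
  if q == p then arm_coord x p.-1 + arm_coord x p.+1 - arm_coord x p else arm_coord x q.
Proof.
move=> hp; have /andP[_ ps] := hp; have [->|qp] := eqVneq q p.
  by rewrite /arm_coord ps ffunE form_arm // evecE eqxx /arm_coord ps /=; ring.
by rewrite /arm_coord; case: ifP => // qs; rewrite refl_neq // arm_inord_eq // eq_sym.
Qed.

Lemma arm_coord_antitone p v : is_root v -> 0 < v (@arm r k s i ord0) ->
  arm_coord v p.+1 <= arm_coord v p.
Proof.
have [n] := ubnP (s i - p); elim: n p v => // n IH p v ltn v_root v0.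
have [sp|ps] := leqP (s i) p.
  by rewrite {1}/arm_coord ltnNge sp; apply/arm_coord_ge0/(root_nonneg v_root v0).
have hp : (0 < p.+1 <= s i)%N by [].
have ltn' : (s i - p.+1 < n)%N by lia.
have v'0 : 0 < refl (A p.+1) v (@arm r k s i ord0) by rewrite refl_neq // arm_eq eqxx inordK.
have := IH p.+1 _ ltn' (is_root_weyl [:: A p.+1] v_root) v'0.
rewrite !arm_coord_refl // eqxx (gtn_eqF (ltnSn p.+1)) /= addrAC => step.
by rewrite -subr_ge0 -(lerD2r (arm_coord v p.+2)) add0r.
Qed.

End Arms.

Theorem lemma2p7 (r k : nat) (s : 'I_k -> nat) (v : {ffun vert r s -> int}) :
  (forall a, 0 <= v a) -> is_root v ->
  forall i : 'I_k, 0 < v (@arm r k s i ord0) ->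
  forall j1 j2 : 'I_(s i).+1, (j1 <= j2)%N -> v (@arm r k s i j2) <= v (@arm r k s i j1).
Proof.
(* nonnegativity of v follows from [root_nonneg] *)
move=> _ v_root i v0 j1 j2 j12.
have anti : {homo arm_coord i v : p q / (p <= q)%N >-> q <= p}.
  apply: homo_leq => [x|y x z xy yz|p]; [exact: lexx|exact: le_trans yz xy|].
  exact: arm_coord_antitone.
by have := anti _ _ j12; rewrite /arm_coord !leq_ord !inord_val.
Qed.
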